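(* Let $K\ge 2$, let $(n_1,\dots,n_K)$ be positive integers, and let $i,j\in\{1,\dots,K\}$ be indices with $n_i<n_j$. Let $\tau$ be the time of the first emptying event and let $p\in\{1,\dots,K\}$ be the (random) type that is emptied at time $\tau$. Then for every $t$, \[ \Pr[p=i \text{ and } \tau\le t]\ \ge\ \Pr[p=j \text{ and } \tau\le t]. \]
   Context: Initial stocks $\vec n^{(0)}=(n_1,\dots,n_K)$ of $K$ goodie types evolve as follows: at each step $t=1,2,\dots$, as long as at least two coordinates of $\vec n^{(t-1)}$ are nonzero, an index $i$ is chosen uniformly at random (independently of the past) among the indices with $n_i^{(t-1)}>0$, and $\vec n^{(t)}=\vec n^{(t-1)}-\vec e_i$ ($\vec e_i$ the $i$-th standard unit vector). The time of the first emptying event is $\tau=\min\{t : \exists i \text{ with } n_i^{(t)}=0 \text{ and } n_i^{(0)}>0\}$; exactly one type is emptied at that step, and $p$ denotes that type. *)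

From mathcomp Require Import all_boot all_order all_algebra.
Set Implicit Arguments. Unset Strict Implicit. Unset Printing Implicit Defensive.
Import Order.TTheory GRing.Theory Num.Theory.
Local Open Scope ring_scope.

Definition pos_idx (K : nat) (n : {ffun 'I_K -> nat}) : {set 'I_K} :=
  [set k | (0 < n k)%N].

Definition dec (K : nat) (n : {ffun 'I_K -> nat}) (k : 'I_K) : {ffun 'I_K -> nat} :=
  [ffun l => if l == k then (n l).-1 else n l].

(* first_empty_prob t n i = Pr[p = i and tau <= t] for the process started
   from the stock vector n, all of whose coordinates are assumed positive
   (so that an emptying event is exactly a coordinate dropping to 0). *)
Fixpoint first_empty_prob (K : nat) (t : nat) (n : {ffun 'I_K -> nat}) (i : 'I_K)
  : rat :=
  match t with
  | 0 => 0
  | t'.+1 =>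
      if (#|pos_idx n| < 2)%N then 0 else
      \sum_(k in pos_idx n)
        (#|pos_idx n|%:R)^-1 *
        (if n k == 1%N then (k == i)%:R else first_empty_prob t' (dec n k) i)
  end.

From mathcomp Require Import all_boot all_order all_algebra.
From mathcomp Require Import perm zify.
Import Order.TTheory GRing.Theory Num.Theory.
Local Open Scope ring_scope.

(* Induction on t, coupling the two processes through the index k drawn at
   the first step: both probabilities average over the same k, so it suffices
   to compare them term by term.  The draw cannot empty j (that needs
   n j = 1, hence n i = 0), and it preserves n i <= n j, though perhaps
   only weakly; a tie n i = n j is settled by the symmetry of the process
   under swapping the labels i and j. *)

Section Relabeling.

Variables (K : nat) (s : {perm 'I_K}).

Lemma pos_idx_perm (n : {ffun 'I_K -> nat}) :
  pos_idx [ffun k => n (s k)] = s @^-1: pos_idx n.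
Proof. by apply/setP => k; rewrite !inE ffunE. Qed.

Lemma dec_perm (n : {ffun 'I_K -> nat}) (k : 'I_K) :
  dec [ffun l => n (s l)] k = [ffun l => dec n (s k) (s l)].
Proof. by apply/ffunP => l; rewrite !ffunE (inj_eq perm_inj). Qed.

Lemma first_empty_prob_perm (t : nat) (n : {ffun 'I_K -> nat}) (x : 'I_K) :
  first_empty_prob t [ffun k => n (s k)] x = first_empty_prob t n (s x).
Proof.
elim: t n x => [//|t IHt] n x /=.
have card_pos : #|pos_idx [ffun k => n (s k)]| = #|pos_idx n|.
  by rewrite pos_idx_perm card_preimset //; apply: perm_inj.
rewrite card_pos; case: ifP => // _.
rewrite [RHS](reindex_inj (@perm_inj _ s)) /=.
apply: eq_big => [k | k _]; first by rewrite pos_idx_perm inE.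
by rewrite ffunE (inj_eq perm_inj) dec_perm IHt.
Qed.

End Relabeling.

Lemma first_empty_prob_tie (K t : nat) (n : {ffun 'I_K -> nat}) (i j : 'I_K) :
  n i = n j -> first_empty_prob t n j = first_empty_prob t n i.
Proof.
move=> nij; have n_swap : n = [ffun k => n (tperm i j k)].
  by apply/ffunP => k; rewrite ffunE; case: tpermP => // ->.
by rewrite {1}n_swap first_empty_prob_perm tpermR.
Qed.

Lemma dec_gt0 (K : nat) (n : {ffun 'I_K -> nat}) (k : 'I_K) :
  (forall l, 0 < n l)%N -> n k != 1%N -> forall l, (0 < dec n k l)%N.
Proof.
by move=> n_gt0 nk1 l; rewrite ffunE; move: (n_gt0 l); case: eqP => [->|_]; lia.
Qed.

Lemma dec_le (K : nat) (n : {ffun 'I_K -> nat}) (k i j : 'I_K) :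
  (n i < n j)%N -> (dec n k i <= dec n k j)%N.
Proof. by rewrite !ffunE; do 2!case: eqP => [-> | _]; lia. Qed.

Lemma first_empty_prob_le (K t : nat) (n : {ffun 'I_K -> nat}) (i j : 'I_K) :
  (forall k, 0 < n k)%N -> (n i <= n j)%N ->
  first_empty_prob t n j <= first_empty_prob t n i.
Proof.
elim: t n i j => [//|t IHt] n i j n_gt0.
rewrite leq_eqVlt => /orP[/eqP/first_empty_prob_tie-> // | nij] /=.
case: ifP => // _; apply: ler_sum => k _.
apply: ler_wpM2l; first by rewrite invr_ge0 ler0n.
case: ifP => [/eqP nk1 | /negbT nk1].
  have kj : k != j by apply/eqP => kj; move: nij (n_gt0 i); rewrite -kj nk1; lia.
  by rewrite (negbTE kj) ler0n.
by apply: IHt; [exact: dec_gt0 | exact: dec_le].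
Qed.

Theorem lemma9 (K : nat) (n : {ffun 'I_K -> nat}) (i j : 'I_K) :
  (2 <= K)%N ->
  (forall k : 'I_K, (0 < n k)%N) ->
  (n i < n j)%N ->
  forall t : nat, first_empty_prob t n j <= first_empty_prob t n i.
Proof.
move=> _ n_gt0 nij t.
by apply: first_empty_prob_le => //; apply: ltnW.
Qed.
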